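(* Let $R$ be a commutative noetherian ring and $A=R[T]$. Let $I\subseteq A$ be a locally complete intersection ideal of height $r$ such that $T$ is a nonzerodivisor on $A/I$. Then the commutative square of natural maps $$\begin{array}{ccc} I/TI^2 & \to & I/TI\\ \downarrow && \downarrow\\ I/I^2 & \to & I/(I^2+TI)\end{array}$$ is Cartesian. Moreover, with $I(0)\subseteq R$ the image of $I$ under $T\mapsto0$, the natural maps give isomorphisms $I/TI\cong I(0)$ and $I/(I^2+TI)\cong I(0)/I(0)^2$.
   Context: ''$I$ is a locally complete intersection ideal'' is used in the sense that $I$ is locally generated by a regular sequence, so that $I/I^2$ is a projective $A/I$-module. *)

From mathcomp Require Import all_boot all_algebra.
Set Implicit Arguments. Unset Strict Implicit. Unset Printing Implicit Defensive.
Import GRing.Theory.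
Local Open Scope ring_scope.

Section Defs.
Variable R : comRingType.

Definition is_ideal (J : R -> Prop) : Prop :=
  [/\ J 0, (forall x y, J x -> J y -> J (x + y)) & (forall a x, J x -> J (a * x))].

Definition is_prime (P : R -> Prop) : Prop :=
  [/\ is_ideal P, ~ P 1 & (forall a b, P (a * b) -> P a \/ P b)].

Definition subset (J K : R -> Prop) : Prop := forall x, J x -> K x.

Definition ideal_gen (n : nat) (f : 'I_n -> R) (k : nat) (x : R) : Prop :=
  exists c : 'I_n -> R, x = \sum_(i < n | (i < k)%N) c i * f i.

Definition noetherian : Prop :=
  forall J, is_ideal J -> exists n (f : 'I_n -> R), forall x, J x <-> ideal_gen f n x.

Definition prime_chain (n : nat) (Q : nat -> R -> Prop) : Prop :=
  (forall i, (i <= n)%N -> is_prime (Q i)) /\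
  (forall i, (i < n)%N -> subset (Q i) (Q i.+1) /\ exists x, Q i.+1 x /\ ~ Q i x).

Definition height_ge (P : R -> Prop) (n : nat) : Prop :=
  exists Q, prime_chain n Q /\ forall x, Q n x <-> P x.

Definition ideal_height_eq (J : R -> Prop) (r : nat) : Prop :=
  (forall P, is_prime P -> subset J P -> height_ge P r) /\
  (exists P, [/\ is_prime P, subset J P & ~ height_ge P r.+1]).

(* locally complete intersection: for each prime P ⊇ J, J_P is generated by
   a regular sequence f_1..f_n of A_P with f_i ∈ J (expressed without
   localization: "exists t ∉ P" encodes equalities in A_P). *)
Definition lci (J : R -> Prop) : Prop :=
  forall P, is_prime P -> subset J P ->
    exists n (f : 'I_n -> R),
      [/\ forall i, J (f i),
          (forall x, J x -> exists t, ~ P t /\ ideal_gen f n (t * x)) &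
          (forall (i : 'I_n) a, ideal_gen f i (f i * a) ->
              exists t, ~ P t /\ ideal_gen f i (t * a))].

Definition ideal_mul (J K : R -> Prop) : R -> Prop :=
  fun x => exists n (a b : 'I_n -> R),
    [/\ forall i, J (a i), forall i, K (b i) & x = \sum_i a i * b i].

Definition ideal_add (J K : R -> Prop) : R -> Prop :=
  fun x => exists u v, [/\ J u, K v & x = u + v].

Definition scale_set (t : R) (J : R -> Prop) : R -> Prop :=
  fun x => exists y, J y /\ x = t * y.

Definition coset (K : R -> Prop) (x : R) : R -> Prop := fun y => K (y - x).

Definition quotient_set (J K : R -> Prop) : (R -> Prop) -> Prop :=
  fun C => exists x, J x /\ C = coset K x.

End Defs.

(* the map induced by f on classes: class C is sent to the class D
   iff f x ∈ D for some x ∈ C *)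
Definition induced_rel (R S : Type) (f : R -> S) (C : R -> Prop) (D : S -> Prop) : Prop :=
  exists x, C x /\ D (f x).

Definition induced_bij (R S : Type) (Q1 : (R -> Prop) -> Prop) (Q2 : (S -> Prop) -> Prop)
  (f : R -> S) : Prop :=
  (forall C, Q1 C -> exists! D, Q2 D /\ induced_rel f C D) /\
  (forall D, Q2 D -> exists! C, Q1 C /\ induced_rel f C D).

Definition ideal_at0 (R : comRingType) (J : {poly R} -> Prop) : R -> Prop :=
  fun y => exists p, J p /\ y = p.[0].

From Pilot Require Import Defs.
From mathcomp Require Import all_boot all_algebra.
From mathcomp Require Import ring boolp.
From mathcomp Require classical_sets.
Set Implicit Arguments. Unset Strict Implicit. Unset Printing Implicit Defensive.
Import GRing.Theory.
Local Open Scope ring_scope.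

(* The two isomorphisms are formal: evaluation at [T = 0] maps [I] onto [I(0)]
   with kernel exactly [TI], because [T] is a nonzerodivisor modulo [I].  The
   square is Cartesian iff [I^2 ∩ TI = TI^2], i.e. iff [T b ∈ I^2] forces
   [b ∈ I^2] for [b ∈ I].  This is checked locally at every prime [P ⊇ I],
   where [I] is generated by a regular sequence [f]: writing [b = Σ c_i f_i]
   and [T b = Σ g_i f_i] with [g_i ∈ I], the syzygy [Σ (T c_i - g_i) f_i = 0]
   of a regular sequence has coefficients in [(f) = I]; hence [T c_i ∈ I], so
   [c_i ∈ I] and [b ∈ I^2]. *)

Section Ideals.
Variable A : comRingType.
Implicit Types (J K P : A -> Prop) (t x y : A).

Lemma ideal0 J : is_ideal J -> J 0.
Proof. by case. Qed.

Lemma idealD J x y : is_ideal J -> J x -> J y -> J (x + y).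
Proof. by case=> _ + _; apply. Qed.

Lemma idealM J t x : is_ideal J -> J x -> J (t * x).
Proof. by case=> _ _; apply. Qed.

Lemma idealMr J t x : is_ideal J -> J x -> J (x * t).
Proof. by rewrite mulrC; apply: idealM. Qed.

Lemma idealN J x : is_ideal J -> J x -> J (- x).
Proof. by rewrite -mulN1r; apply: idealM. Qed.

Lemma idealB J x y : is_ideal J -> J x -> J y -> J (x - y).
Proof. by move=> HJ Jx Jy; apply: idealD => //; apply: idealN. Qed.

Lemma ideal_sum J (I : finType) (Q : pred I) (F : I -> A) : is_ideal J ->
  (forall i, Q i -> J (F i)) -> J (\sum_(i | Q i) F i).
Proof. by move=> HJ; apply: big_ind => //; [apply: ideal0 | move=> x y; apply: idealD]. Qed.

Lemma eq_coset J x y : is_ideal J -> J (x - y) -> coset J x = coset J y.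
Proof.
move=> HJ Jxy; apply: funext => z; apply: propext; rewrite /coset; split => Jz.
- have -> : z - y = (z - x) + (x - y) by ring.
  exact: idealD.
- have -> : z - x = (z - y) - (x - y) by ring.
  exact: idealB.
Qed.

Lemma is_ideal_mul J K : is_ideal K -> is_ideal (ideal_mul J K).
Proof.
move=> HK; split.
- by exists 0%N, (fun=> 0), (fun=> 0); rewrite big_ord0; split => // -[].
- move=> _ _ [n [a [b [Ja Kb ->]]]] [m [a' [b' [Ja' Kb' ->]]]].
  pose glue (u : 'I_n -> A) (v : 'I_m -> A) i :=
    match split i with inl j => u j | inr k => v k end.
  exists (n + m)%N, (glue a a'), (glue b b'); split.
  + by move=> i; rewrite /glue; case: (split i).
  + by move=> i; rewrite /glue; case: (split i).
  + rewrite big_split_ord /glue; congr (_ + _); apply: eq_bigr => i _.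
    * by rewrite (unsplitK (inl _ i)).
    * by rewrite (unsplitK (inr _ i)).
- move=> t _ [n [a [b [Ja Kb ->]]]]; exists n, a, (fun i => t * b i); split => //.
  + by move=> i; apply: idealM.
  + by rewrite mulr_sumr; apply: eq_bigr => i _; rewrite mulrCA.
Qed.

Lemma ideal_mul_subr J K : is_ideal K -> Defs.subset (ideal_mul J K) K.
Proof. by move=> HK _ [n [a [b [_ Kb ->]]]]; apply: ideal_sum => // i _; apply: idealM. Qed.

Lemma is_ideal_add J K : is_ideal J -> is_ideal K -> is_ideal (ideal_add J K).
Proof.
move=> HJ HK; split.
- by exists 0, 0; rewrite addr0; split => //; apply: ideal0.
- move=> _ _ [u [v [Ju Kv ->]]] [u' [v' [Ju' Kv' ->]]]; exists (u + u'), (v + v').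
  by split; [apply: idealD|apply: idealD|rewrite addrACA].
- move=> t _ [u [v [Ju Kv ->]]]; exists (t * u), (t * v).
  by split; [apply: idealM|apply: idealM|rewrite mulrDr].
Qed.

Lemma is_ideal_scale J t : is_ideal J -> is_ideal (scale_set t J).
Proof.
move=> HJ; split.
- by exists 0; rewrite mulr0; split => //; apply: ideal0.
- move=> _ _ [u [Ju ->]] [v [Jv ->]]; exists (u + v).
  by split; [apply: idealD|rewrite mulrDr].
- move=> s _ [u [Ju ->]]; exists (s * u).
  by split; [apply: idealM|rewrite mulrCA].
Qed.

Lemma scale_set_sub J t : is_ideal J -> Defs.subset (scale_set t J) J.
Proof. by move=> HJ _ [u [Ju ->]]; apply: idealM. Qed.

Lemma scale_setS J K t : Defs.subset J K -> Defs.subset (scale_set t J) (scale_set t K).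
Proof. by move=> JK _ [u [Ju ->]]; exists u; split => //; apply: JK. Qed.

Lemma is_ideal_eq0 : is_ideal (fun x : A => x = 0).
Proof. by split=> [|x y -> ->|t x ->]; rewrite ?addr0 ?mulr0. Qed.

Lemma primeM P x y : is_prime P -> ~ P x -> ~ P y -> ~ P (x * y).
Proof. by case=> _ _ HP nPx nPy /HP []. Qed.

Lemma prime_of_comaximal M : is_ideal M -> ~ M 1 ->
  (forall c, ~ M c -> exists y d, M y /\ 1 = y + d * c) -> is_prime M.
Proof.
move=> HM nM1 comax; split=> // a b Mab; apply: contrapT => /not_orP[nMa nMb].
have [y1 [d1 [My1 E1]]] := comax a nMa.
have [y2 [d2 [My2 E2]]] := comax b nMb.
apply: nM1; have -> : 1 = y1 * (y2 + d2 * b) + d1 * a * y2 + d1 * d2 * (a * b) :> A.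
  by rewrite -[LHS]mulr1 {1}E1 E2; ring.
apply: (idealD HM); first apply: (idealD HM).
- exact: idealMr.
- exact: idealM.
- exact: idealM.
Qed.

Lemma exists_prime_over K : is_ideal K -> ~ K 1 -> exists P, is_prime P /\ Defs.subset K P.
Proof.
move=> HK nK1.
(* The last clause holds vacuously for the empty set, the union of the empty
   chain, and forces a nonempty [J] to contain [K]. *)
pose proper_over J := [/\ ~ J 1, forall x y, J x -> J y -> J (x + y),
  forall t x, J x -> J (t * x) & forall x, J x -> Defs.subset K J].
have [M [[nM1 MD MM MK] Mmax]] : exists M, proper_over M /\
    forall B, classical_sets.proper M B -> ~ proper_over B.
  apply: classical_sets.Zorn_bigcup => F FP Ftot; split.
  - by case=> J /FP[].
  - move=> x y [J FJ Jx] [J' FJ' J'y].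
    have [JJ'|J'J] := Ftot J J' FJ FJ'.
    + by exists J' => //; case: (FP J' FJ') => _ + _ _; apply => //; apply: JJ'.
    + by exists J => //; case: (FP J FJ) => _ + _ _; apply => //; apply: J'J.
  - by move=> t x [J FJ Jx]; exists J => //; case: (FP J FJ) => _ _ + _; apply.
  - move=> x [J FJ Jx] y Ky; exists J => //.
    by case: (FP J FJ) => _ _ _ /(_ x Jx); apply.
have [x0 Mx0] : exists x, M x.
  apply: contrapT => nM; apply: (Mmax K); last by case: HK => _ KD KMul; split=> // x _ y.
  split=> [x Mx|MK']; first by case: nM; exists x.
  by apply: nM; exists 0; apply: MK'; apply: ideal0.
have KM := MK x0 Mx0.
have HM : is_ideal M by split=> //; apply: KM; apply: ideal0.
exists M; split=> //; apply: prime_of_comaximal => // c nMc.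
apply: contrapT => nE; pose B x := exists y d, M y /\ x = y + d * c.
apply: (Mmax B); split.
- by move=> x Mx; exists x, 0; rewrite mul0r addr0.
- by move=> MB; apply: nMc; apply: MB; exists 0, 1; rewrite mul1r add0r; split=> //; apply: ideal0.
- by case=> y [d [My E]]; apply: nE; exists y, d.
- move=> _ _ [y1 [d1 [M1 ->]]] [y2 [d2 [M2 ->]]]; exists (y1 + y2), (d1 + d2).
  by split; [apply: MD|rewrite mulrDl addrACA].
- move=> t _ [y [d [My ->]]]; exists (t * y), (t * d).
  by split; [apply: MM|rewrite mulrDr mulrA].
- by move=> x _ y Ky; exists y, 0; rewrite mul0r addr0; split => //; apply: KM.
Qed.

Lemma ideal1_of_local K : is_ideal K ->
  (forall P, is_prime P -> exists s, K s /\ ~ P s) -> K 1.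
Proof.
move=> HK loc; apply: contrapT => /(exists_prime_over HK)[P [HP KP]].
by have [s [Ks]] := loc P HP; apply; apply: KP.
Qed.

End Ideals.

Section Localization.
Variables (A : comRingType) (P : A -> Prop).
Hypothesis HP : is_prime P.
Implicit Types (J K : A -> Prop) (t x : A).

(* [local_mem P J x] says that [x/1] lies in the localized ideal [J_P]. *)
Definition local_mem J x : Prop := exists t, ~ P t /\ J (t * x).

Lemma local_mem_id J : Defs.subset J (local_mem J).
Proof. by move=> x Jx; exists 1; rewrite mul1r; case: HP. Qed.

Lemma local_memS J K : Defs.subset J K -> Defs.subset (local_mem J) (local_mem K).
Proof. by move=> JK x [t [nPt Jtx]]; exists t; split=> //; apply: JK. Qed.

Lemma local_memMl J t x : ~ P t -> local_mem J (t * x) -> local_mem J x.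
Proof.
by move=> nPt [s [nPs Jstx]]; exists (s * t); rewrite -mulrA; split=> //; apply: primeM.
Qed.

Lemma is_ideal_local J : is_ideal J -> is_ideal (local_mem J).
Proof.
move=> HJ; split.
- by apply: local_mem_id; apply: ideal0.
- move=> x y [s [nPs Jsx]] [t [nPt Jty]]; exists (s * t); split; first exact: primeM.
  rewrite mulrDr; apply: (idealD HJ).
  + by rewrite mulrAC; apply: idealMr.
  + by rewrite -mulrA; apply: idealM.
- by move=> a x [t [nPt Jtx]]; exists t; split=> //; rewrite mulrCA; apply: idealM.
Qed.

End Localization.

Section Generators.
Variables (A : comRingType) (n : nat) (f : 'I_n -> A).
Implicit Types (J K P : A -> Prop).

Lemma is_ideal_gen k : is_ideal (ideal_gen f k).
Proof.
split.
- by exists (fun=> 0); rewrite big1 // => i _; rewrite mul0r.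
- move=> _ _ [c ->] [c' ->]; exists (fun i => c i + c' i).
  by rewrite -big_split; apply: eq_bigr => i _; rewrite mulrDl.
- move=> a _ [c ->]; exists (fun i => a * c i).
  by rewrite mulr_sumr; apply: eq_bigr => i _; rewrite mulrA.
Qed.

Lemma mem_ideal_gen k (i : 'I_n) : (i < k)%N -> ideal_gen f k (f i).
Proof.
move=> ik; exists (fun j => (j == i)%:R).
rewrite (bigD1 i) //= eqxx mul1r big1 ?addr0 // => j /andP[_ /negbTE ->].
by rewrite mul0r.
Qed.

Lemma ideal_genS k k' : (k <= k')%N -> Defs.subset (ideal_gen f k) (ideal_gen f k').
Proof.
move=> kk' _ [c ->]; exists (fun i : 'I_n => if (i < k)%N then c i else 0).
rewrite big_mkcond [RHS]big_mkcond; apply: eq_bigr => i _.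
case: ifP => ik; first by rewrite (leq_trans ik kk').
by case: ifP; rewrite ?mul0r.
Qed.

Lemma ideal_gen_sub J k : is_ideal J -> (forall i, J (f i)) ->
  Defs.subset (ideal_gen f k) J.
Proof. by move=> HJ Jf _ [c ->]; apply: ideal_sum => // i _; apply: idealM. Qed.

Definition span_in J x : Prop :=
  exists g : 'I_n -> A, (forall i, J (g i)) /\ x = \sum_i g i * f i.

Lemma is_ideal_span_in J : is_ideal J -> is_ideal (span_in J).
Proof.
move=> HJ; split.
- exists (fun=> 0); split; first by move=> _; apply: ideal0.
  by rewrite big1 // => i _; rewrite mul0r.
- move=> _ _ [g [Jg ->]] [g' [Jg' ->]]; exists (fun i => g i + g' i).
  split; first by move=> i; apply: idealD.
  by rewrite -big_split; apply: eq_bigr => i _; rewrite mulrDl.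
- move=> a _ [g [Jg ->]]; exists (fun i => a * g i).
  split; first by move=> i; apply: idealM.
  by rewrite mulr_sumr; apply: eq_bigr => i _; rewrite mulrA.
Qed.

Lemma ideal_mul_local_span P J K : is_prime P -> is_ideal K ->
  Defs.subset J (local_mem P (ideal_gen f n)) ->
  Defs.subset (ideal_mul J K) (local_mem P (span_in K)).
Proof.
move=> HP HK Jloc _ [m [a [b [Ja Kb ->]]]].
apply: ideal_sum => [|j _]; first by apply: is_ideal_local; last apply: is_ideal_span_in.
have [t [nPt [d Ed]]] := Jloc _ (Ja j).
exists t; split=> //; exists (fun i => d i * b j); split; first by move=> i; apply: idealM.
rewrite mulrA Ed mulr_suml.
by under eq_bigl do rewrite ltn_ord; apply: eq_bigr => i _; rewrite mulrAC.
Qed.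

End Generators.

Section RegularSequence.
Variables (A : comRingType) (P : A -> Prop) (n : nat) (f : 'I_n -> A).
Hypothesis HP : is_prime P.
Hypothesis f_regular : forall (i : 'I_n) a,
  ideal_gen f i (f i * a) -> local_mem P (ideal_gen f i) a.

Lemma regular_syzygy k (c : 'I_n -> A) : (k <= n)%N ->
  \sum_(i < n | (i < k)%N) c i * f i = 0 ->
  forall i : 'I_n, (i < k)%N -> local_mem P (ideal_gen f k) (c i).
Proof.
elim: k c => [//|k IHk] c kn csyz i ik; pose j := Ordinal kn.
have sum_split (d : 'I_n -> A) : \sum_(i < n | (i < k.+1)%N) d i * f i
    = \sum_(i < n | (i < k)%N) d i * f i + d j * f j.
  rewrite (bigD1 j) //= addrC; congr (_ + _); apply: eq_bigl => i'.
  by rewrite ltnS ltn_neqAle andbC.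
have [t [nPt [h Eh]]] : local_mem P (ideal_gen f j) (c j).
  apply: f_regular; exists (fun i => - c i).
  have -> : f j * c j = - \sum_(i < n | (i < k)%N) c i * f i.
    by apply/eqP; rewrite -addr_eq0 addrC mulrC -sum_split csyz.
  by rewrite -sumrN; apply: eq_bigr => i' _; rewrite mulNr.
pose c' i := t * c i + h i * f j.
have c'syz : \sum_(i < n | (i < k)%N) c' i * f i = 0.
  transitivity (t * \sum_(i < n | (i < k.+1)%N) c i * f i); last by rewrite csyz mulr0.
  rewrite sum_split mulrDr [t * (c j * f j)]mulrA Eh mulr_sumr mulr_suml -big_split.
  by apply: eq_bigr => i' _; rewrite mulrDl -mulrA mulrAC.
have gen_loc := is_ideal_local HP (is_ideal_gen f k.+1).
have [/eqP -> | nij] := boolP (i == j).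
  apply: (local_memMl HP nPt); apply: local_mem_id => //.
  by apply: (ideal_genS (leqnSn k)); exists h.
have {}ik : (i < k)%N.
  move: ik; rewrite ltnS leq_eqVlt => /orP[/eqP eik|//].
  by case/negP: nij; apply/eqP/val_inj.
apply: (local_memMl HP nPt).
have -> : t * c i = c' i - h i * f j by rewrite /c' addrK.
apply: idealB => //.
- by apply: (local_memS (ideal_genS (leqnSn k))); apply: IHk (ltnW kn) c'syz i ik.
- by apply: local_mem_id => //; apply: idealM; [apply: is_ideal_gen | apply: mem_ideal_gen].
Qed.

End RegularSequence.

Section SquareCancellation.
Variables (A : comRingType) (I : A -> Prop) (T : A).
Hypotheses (HI : is_ideal I) (T_nzd : forall x, I (T * x) -> I x).

Lemma lci_local_sq_cancel P n (f : 'I_n -> A) b : is_prime P ->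
  (forall i, I (f i)) -> Defs.subset I (local_mem P (ideal_gen f n)) ->
  (forall (i : 'I_n) a, ideal_gen f i (f i * a) -> local_mem P (ideal_gen f i) a) ->
  I b -> ideal_mul I I (T * b) -> local_mem P (ideal_mul I I) b.
Proof.
move=> HP fI Igen f_regular Ib ITb.
have [t0 [nPt0 [c Ec]]] := Igen b Ib.
have {}Ec : t0 * b = \sum_i c i * f i by rewrite Ec; apply: eq_bigl => i; rewrite ltn_ord.
have [u [nPu [g [Ig Eg]]]] := ideal_mul_local_span HP HI Igen ITb.
have syz : \sum_(i < n | (i < n)%N) (u * T * c i - t0 * g i) * f i = 0.
  under eq_bigl do rewrite ltn_ord.
  transitivity (u * T * (t0 * b) - t0 * (u * (T * b))); last by ring.
  rewrite Ec Eg !mulr_sumr -sumrB.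
  by apply: eq_bigr => i _; rewrite mulrBl !mulrA.
have c_loc i : local_mem P I (c i).
  apply: (local_memMl HP nPu).
  have [s [nPs Is]] := local_memS (ideal_gen_sub HI fI)
    (regular_syzygy HP f_regular (leqnn n) syz (ltn_ord i)).
  exists s; split=> //; apply: T_nzd.
  have -> : T * (s * (u * c i)) = s * (u * T * c i - t0 * g i) + s * t0 * g i by ring.
  by apply: idealD => //; apply: idealM.
apply: (local_memMl HP nPt0); rewrite Ec.
apply: ideal_sum => [|i _]; first exact/is_ideal_local/is_ideal_mul.
have [s [nPs Isc]] := c_loc i; exists s; split=> //.
by exists 1%N, (fun=> s * c i), (fun=> f i); rewrite big_ord1 mulrA.
Qed.

Lemma lci_sq_cancel b : lci I -> I b -> ideal_mul I I (T * b) -> ideal_mul I I b.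
Proof.
move=> I_lci Ib ITb; pose K s := ideal_mul I I (s * b).
have HK : is_ideal K.
  have HI2 := is_ideal_mul I HI.
  split; rewrite /K.
  - by rewrite mul0r; apply: ideal0.
  - by move=> x y Kx Ky; rewrite mulrDl; apply: idealD.
  - by move=> a x Kx; rewrite -mulrA; apply: idealM.
rewrite -[b]mul1r; apply: ideal1_of_local HK _ => P HP.
have [IP | /existsNP[s /not_implyP[Is nPs]]] := pselect (Defs.subset I P).
  have [n [f [fI Igen f_regular]]] := I_lci P HP IP.
  have [s [nPs Ksb]] := lci_local_sq_cancel HP fI Igen f_regular Ib ITb.
  by exists s.
by exists s; split=> //; exists 1%N, (fun=> s), (fun=> b); rewrite big_ord1.
Qed.

End SquareCancellation.

Section Quotients.
Variable A : comRingType.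
Implicit Types (J K L : A -> Prop) (x : A).

Lemma coset_self J x : is_ideal J -> coset J x x.
Proof. by rewrite /coset subrr; apply: ideal0. Qed.

Lemma ideal_add_l J K : is_ideal K -> Defs.subset J (ideal_add J K).
Proof. by move=> HK x Jx; exists x, 0; rewrite addr0; split=> //; apply: ideal0. Qed.

Lemma ideal_add_r J K : is_ideal J -> Defs.subset K (ideal_add J K).
Proof. by move=> HJ x Kx; exists 0, x; rewrite add0r; split=> //; apply: ideal0. Qed.

Lemma quotient_square_cartesian J K1 K2 L :
  is_ideal J -> is_ideal K1 -> is_ideal K2 -> is_ideal L ->
  Defs.subset K1 J -> Defs.subset L K1 -> Defs.subset L K2 ->
  (forall x, K1 x -> K2 x -> L x) ->
  forall C1 C2, quotient_set J K1 C1 -> quotient_set J K2 C2 ->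
  (exists D, [/\ quotient_set J (ideal_add K1 K2) D, induced_rel id C1 D & induced_rel id C2 D]) ->
  exists! C, [/\ quotient_set J L C, induced_rel id C C1 & induced_rel id C C2].
Proof.
move=> HJ HK1 HK2 HL K1J LK1 LK2 K12L _ _ [x1 [Jx1 ->]] [x2 [Jx2 ->]].
move=> [_ [[y [_ ->]] [z1 [K1z1 Dz1]] [z2 [K2z2 Dz2]]]].
rewrite /coset in K1z1 K2z2 Dz1 Dz2.
have HK12 := is_ideal_add HK1 HK2.
have [u [v [K1u K2v Euv]]] : ideal_add K1 K2 (x1 - x2).
  have -> : x1 - x2 = (z1 - y) - (z1 - x1) - ((z2 - y) - (z2 - x2)) by ring.
  apply: idealB => //; apply: idealB => //.
  - exact: ideal_add_l.
  - exact: ideal_add_r.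
have Ev : x1 - u - x2 = v by rewrite addrAC Euv addrC addKr.
exists (coset L (x1 - u)); split.
  split; first by exists (x1 - u); split=> //; apply: idealB => //; apply: K1J.
  - exists (x1 - u); split; first exact: coset_self.
    by rewrite /coset addrAC subrr add0r; apply: idealN.
  - by exists (x1 - u); split; [apply: coset_self | rewrite /coset Ev].
move=> _ [[x' [_ ->]] [w1 [Lw1 K1w1]] [w2 [Lw2 K2w2]]].
rewrite /coset /= in Lw1 K1w1 Lw2 K2w2.
apply: eq_coset => //; apply: K12L.
- have -> : x1 - u - x' = (w1 - x') - (w1 - x1) - u by ring.
  by apply: idealB => //; apply: idealB => //; apply: LK1.
- have -> : x1 - u - x' = (w2 - x') - (w2 - x2) + (x1 - u - x2) by ring.
  by rewrite Ev; apply: idealD => //; apply: idealB => //; apply: LK2.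
Qed.

End Quotients.

Lemma induced_bij_quotient (A B : comRingType) (f : {additive A -> B})
    (J K : A -> Prop) (J' K' : B -> Prop) :
  is_ideal J -> is_ideal K -> is_ideal K' ->
  (forall y, J' y <-> exists x, J x /\ y = f x) ->
  (forall x, K x -> K' (f x)) -> (forall x, J x -> K' (f x) -> K x) ->
  induced_bij (quotient_set J K) (quotient_set J' K') f.
Proof.
move=> HJ HK HK' J'E fK fK'; split.
- move=> _ [x [Jx ->]]; exists (coset K' (f x)); split.
    split; first by exists (f x); split=> //; apply/J'E; exists x.
    by exists x; split; apply: coset_self.
  move=> _ [[y [_ ->]] [z [Kzx K'fz]]]; rewrite /coset in Kzx K'fz.
  apply: eq_coset => //; have -> : f x - y = (f z - y) - f (z - x) by rewrite (raddfB f); ring.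
  by apply: idealB => //; apply: fK.
- move=> _ [_ [/J'E[x [Jx ->]] ->]]; exists (coset K x); split.
    split; first by exists x.
    by exists x; split; apply: coset_self.
  move=> _ [[x' [Jx' ->]] [z [Kzx' K'fz]]]; rewrite /coset in Kzx' K'fz.
  apply: eq_coset => //; apply: fK'; first exact: idealB.
  have -> : f (x - x') = f (z - x') - (f z - f x) by rewrite !(raddfB f); ring.
  by apply: idealB => //; apply: fK.
Qed.

Section EvalAtZero.
Variable R : comRingType.
Implicit Types (J K L : {poly R} -> Prop) (q : {poly R}).

Lemma is_ideal_at0 J : is_ideal J -> is_ideal (ideal_at0 J).
Proof.
move=> HJ; split.
- by exists 0; rewrite horner0; split=> //; apply: ideal0.
- move=> _ _ [p [Jp ->]] [q [Jq ->]]; exists (p + q).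
  by rewrite hornerD; split=> //; apply: idealD.
- move=> a _ [p [Jp ->]]; exists (a%:P * p).
  by rewrite hornerCM; split=> //; apply: idealM.
Qed.

Lemma horner0_scale_X J q : scale_set 'X J q -> q.[0] = 0.
Proof. by case=> p [_ ->]; rewrite hornerM hornerX mul0r. Qed.

Lemma scale_X_of_horner0 J q : (forall p, J ('X * p) -> J p) ->
  J q -> q.[0] = 0 -> scale_set 'X J q.
Proof.
move=> X_nzd Jq q0; have /factor_theorem[p Eq] : root q 0 by apply/eqP.
rewrite subr0 mulrC in Eq.
by exists p; split=> //; apply: X_nzd; rewrite -Eq.
Qed.

Lemma ideal_at0_mul J K y :
  ideal_at0 (ideal_mul J K) y <-> ideal_mul (ideal_at0 J) (ideal_at0 K) y.
Proof.
split.
  move=> [_ [[m [a [b [Ja Kb ->]]]] ->]].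
  exists m, (fun i => (a i).[0]), (fun i => (b i).[0]); split.
  - by move=> i; exists (a i).
  - by move=> i; exists (b i).
  - by rewrite horner_sum; apply: eq_bigr => i _; rewrite hornerM.
move=> [m [a [b [Ja Kb ->]]]].
have [a' Ea'] := fin_all_exists Ja; have [b' Eb'] := fin_all_exists Kb.
exists (\sum_i a' i * b' i); split.
  by exists m, a', b'; split=> // i; [case: (Ea' i) | case: (Eb' i)].
rewrite horner_sum; apply: eq_bigr => i _.
by rewrite hornerM; case: (Ea' i) => _ <-; case: (Eb' i) => _ <-.
Qed.

Lemma horner0_sq_add_scale J L q :
  ideal_add (ideal_mul J J) (scale_set 'X L) q ->
  ideal_mul (ideal_at0 J) (ideal_at0 J) q.[0].
Proof.
move=> [u [v [J2u XLv ->]]]; rewrite hornerD (horner0_scale_X XLv) addr0.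
by apply/ideal_at0_mul; exists u.
Qed.

Lemma sq_add_scale_of_horner0 J q : is_ideal J -> (forall p, J ('X * p) -> J p) ->
  J q -> ideal_mul (ideal_at0 J) (ideal_at0 J) q.[0] ->
  ideal_add (ideal_mul J J) (scale_set 'X J) q.
Proof.
move=> HJ X_nzd Jq /ideal_at0_mul[u [J2u Eu]].
exists u, (q - u); split; [by [] | | by rewrite addrC subrK].
apply: scale_X_of_horner0 => //; last by rewrite hornerD hornerN Eu subrr.
by apply: idealB => //; apply: (ideal_mul_subr HJ J2u).
Qed.

End EvalAtZero.

Unset Implicit Arguments.

Theorem lemma2p13 (R : comRingType) (I : {poly R} -> Prop) (r : nat) :
  noetherian R ->
  is_ideal I ->
  lci I ->
  ideal_height_eq I r ->
  (forall p : {poly R}, I ('X * p) -> I p) ->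
  let I2 := ideal_mul I I in
  let TI := scale_set 'X I in
  let TI2 := scale_set 'X I2 in
  let I2TI := ideal_add I2 TI in
  let I0 := ideal_at0 I in
  (* the square I/TI^2 -> I/I^2, I/TI -> I/(I^2+TI) is Cartesian *)
  (forall C1 C2,
     quotient_set I I2 C1 -> quotient_set I TI C2 ->
     (exists D, [/\ quotient_set I I2TI D, induced_rel id C1 D & induced_rel id C2 D]) ->
     exists! C, [/\ quotient_set I TI2 C, induced_rel id C C1 & induced_rel id C C2])
  /\ induced_bij (quotient_set I TI) (quotient_set I0 (fun y => y = 0))
       (fun p : {poly R} => p.[0])
  /\ induced_bij (quotient_set I I2TI) (quotient_set I0 (ideal_mul I0 I0))
       (fun p : {poly R} => p.[0]).
Proof.
move=> _ HI I_lci _ X_nzd I2 TI TI2 I2TI I0.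
have HI2 : is_ideal I2 := is_ideal_mul I HI.
have HTI : is_ideal TI := is_ideal_scale 'X HI.
have I0E y : I0 y <-> exists p, I p /\ y = horner_eval 0 p by [].
split; [|split].
- apply: quotient_square_cartesian => //.
  + exact: is_ideal_scale.
  + exact: ideal_mul_subr.
  + exact: scale_set_sub.
  + exact: scale_setS (ideal_mul_subr HI).
  + move=> p I2p [q [Iq Ep]]; exists q; split=> //.
    by apply: (lci_sq_cancel HI X_nzd) => //; rewrite -Ep.
- apply: (@induced_bij_quotient _ _ (horner_eval 0) I TI I0 (fun y => y = 0)) => //.
  + exact: is_ideal_eq0.
  + by move=> p; apply: horner0_scale_X.
  + by move=> p; apply: scale_X_of_horner0.
- apply: (@induced_bij_quotient _ _ (horner_eval 0) I I2TI I0 (ideal_mul I0 I0)) => //.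
  + exact: is_ideal_add.
  + exact/is_ideal_mul/is_ideal_at0.
  + by move=> p; apply: horner0_sq_add_scale.
  + by move=> p; apply: sq_add_scale_of_horner0.
Qed.
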